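(* In the setting below, let $M\in\mathcal M$ be a fixed model with $P_n(M)^{-1}e^{-\delta n}\to0$ as $n\to\infty$ for every $\delta>0$. Let $\tilde\theta^M_n=(\tilde\theta^M_{n,j})_{j=1}^p$ be an estimator (a function of $y_1,\dots,y_n$) that is unconditionally unbiased for $\theta^M_0$, and suppose there is a constant $C\in(0,\infty)$ such that for all $1\le j\le p$ and $n\ge1$ the distribution of $\sqrt n(\tilde\theta^M_{n,j}-\theta^M_{0,j})$ is sub-Gaussian with parameter $C$. Then for every $\varepsilon>0$, $$\lim_{n\to\infty}P\big(\|\tilde\theta^M_n-\theta^M_0\|_\infty>\varepsilon\,\big|\,S_n(\bar T_n)=M\big)=0.$$
   Context: Setting: $(y_i)_{i\ge1}$ are i.i.d. from a distribution $f^*$. $\{p_\theta:\theta\in\Theta\}$, $\Theta\subseteq\mathbb R^p$, is a regular exponential family with natural parameter $\theta$, sufficient statistic $T$, and log-likelihood $\ell_\theta(y)=\log p_\theta(y)$; $\bar T_n=n^{-1}\sum_{i=1}^nT(y_i)$. $\mathcal M$ is a countable set of submodels $M=\{p_\theta:\theta\in\Theta^M\}$, $\Theta^M\subseteq\Theta$. For each $n$, $S_n:\mathbb R^p\to\mathcal M$ is a model selection procedure applied to $\bar T_n$, and $P_n(M)=P_{f^*}(S_n(\bar T_n)=M)$ when $y_1,\dots,y_n$ are i.i.d. $f^*$. $f^*$ need not belong to any model. The target is $\theta^M_0=\arg\sup_{\theta\in\Theta^M}\mathbb E_{f^*}[\ell_\theta(y)]$ (assumed to exist). *)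

From HB Require Import structures.
From mathcomp Require Import all_boot all_order all_algebra.
From mathcomp Require Import all_classical all_reals all_analysis.
Set Implicit Arguments. Unset Strict Implicit. Unset Printing Implicit Defensive.
Import Order.TTheory GRing.Theory Num.Theory.
Import numFieldNormedType.Exports.
Local Open Scope classical_set_scope.
Local Open Scope ring_scope.

Definition dotp (R : realType) (p : nat) (a b : 'rV[R]_p) : R :=
  \sum_(j < p) a 0 j * b 0 j.

Definition supnorm (R : realType) (p : nat) (v : 'rV[R]_p) : R :=
  \big[Num.max/0]_(j < p) `|v 0 j|.

Definition logpart (R : realType) (dY : measure_display) (Y : measurableType dY)
  (nu : {measure set Y -> \bar R}) (p : nat) (T : Y -> 'rV[R]_p) (th : 'rV[R]_p) : R :=
  ln (fine (\int[nu]_y (expR (dotp th (T y)))%:E)).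

Definition loglik (R : realType) (dY : measure_display) (Y : measurableType dY)
  (nu : {measure set Y -> \bar R}) (p : nat) (T : Y -> 'rV[R]_p) (th : 'rV[R]_p) (y : Y) : R :=
  dotp th (T y) - logpart nu T th.

(* {p_theta : theta in Theta} is a regular (minimal, full, open) exponential
   family with natural parameter theta, sufficient statistic T, base measure nu:
   p_theta(y) = exp(theta . T(y) - A(theta)) d nu. *)
Definition regular_expfam (R : realType) (dY : measure_display) (Y : measurableType dY)
  (nu : {measure set Y -> \bar R}) (p : nat) (T : Y -> 'rV[R]_p) (Theta : set 'rV[R]_p) : Prop :=
  [/\ forall j, measurable_fun setT (fun y => T y 0 j),
      Theta = [set th | nu.-integrable setT (fun y => (expR (dotp th (T y)))%:E)],
      Theta !=set0,
      open Theta &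
      (* minimality: the components of T are affinely independent *)
      forall (a : 'rV[R]_p) (c : R),
        {ae nu, forall y, dotp a (T y) = c} -> a = 0].

Definition mutually_independent (R : realType) (d : measure_display) (Omega : measurableType d)
  (P : probability Omega R) (dY : measure_display) (Y : measurableType dY)
  (y : nat -> Omega -> Y) : Prop :=
  forall (s : seq nat) (B : nat -> set Y), uniq s ->
    (forall i, measurable (B i)) ->
    fine (P (\big[setI/setT]_(i <- s) (y i @^-1` B i))) =
    \prod_(i <- s) fine (P (y i @^-1` B i)).

Definition subgaussian (R : realType) (d : measure_display) (Omega : measurableType d)
  (P : probability Omega R) (X : Omega -> R) (C : R) : Prop :=
  P.-integrable setT (EFin \o X) /\
  forall lam : R,
    (\int[P]_w (expR (lam * (X w - fine (\int[P]_v (X v)%:E))))%:E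
       <= (expR (C ^+ 2 * lam ^+ 2 / 2))%:E)%E.

(* empirical mean of the sufficient statistic, \bar T_n (y_1..y_n are y 0 .. y (n-1)) *)
Definition Tbar (R : realType) (d : measure_display) (Omega : measurableType d)
  (dY : measure_display) (Y : measurableType dY) (p : nat) (T : Y -> 'rV[R]_p)
  (y : nat -> Omega -> Y) (n : nat) (w : Omega) : 'rV[R]_p :=
  n%:R^-1 *: \sum_(i < n) T (y i w).

From HB Require Import structures.
From mathcomp Require Import all_boot all_order all_algebra.
From mathcomp Require Import all_classical all_reals all_analysis.
From mathcomp Require Import measurable_realfun ring.
Set Implicit Arguments. Unset Strict Implicit. Unset Printing Implicit Defensive.
Import Order.TTheory GRing.Theory Num.Theory.
Import numFieldNormedType.Exports.
Local Open Scope classical_set_scope.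
Local Open Scope ring_scope.

(** Each coordinate of [sqrt n (thetat_n - theta0)] is centered and
   sub-Gaussian with parameter [C], so the Chernoff bound and a union bound over
   the [p] coordinates give
   [P (||thetat_n - theta0||_oo > eps) <= 2 p exp (- eps^2 n / (2 C^2))].
   Bounding the conditional probability by [P(A_n) / P_n(M)], the hypothesis
   [P_n(M)^-1 e^(-delta n) -> 0] with [delta = eps^2 / (2 C^2)] concludes.
   Unbiasedness is only used to center the coordinates. *)

Lemma expR_two_sided_ge1 (R : realType) (lam t x : R) : 0 <= lam -> t < `|x| ->
  1 <= expR (- (lam * t)) * (expR (lam * x) + expR (- lam * x)).
Proof.
move=> lam0 tx.
have : 1 <= expR (- (lam * t)) * expR (lam * `|x|).
  by rewrite -expRD -expR0 ler_expR addrC subr_ge0 ler_wpM2l // ltW.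
move/le_trans; apply; apply: ler_wpM2l; first exact: expR_ge0.
case: (ler0P x) => _; last by rewrite lerDl expR_ge0.
by rewrite mulrN -mulNr lerDr expR_ge0.
Qed.

(* The Chernoff exponent [- lam t + C^2 lam^2 / 2] at its minimiser [lam = t / C^2]. *)
Lemma chernoff_exponent (R : realType) (C t : R) : C != 0 ->
  - (t / C ^+ 2 * t) + C ^+ 2 * (t / C ^+ 2) ^+ 2 / 2 = - (t ^+ 2 / (2 * C ^+ 2)).
Proof. by move=> C0; field; rewrite C0. Qed.

Lemma supnorm_gt_exists (R : realType) (p : nat) (v : 'rV[R]_p) (eps : R) :
  0 <= eps -> eps < supnorm v -> exists j, eps < `|v 0 j|.
Proof.
move=> e0; rewrite /supnorm; elim/big_ind: _.
- by rewrite ltNge e0.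
- by move=> x y hx hy; rewrite lt_max => /orP[/hx|/hy].
- by move=> j _ h; exists j.
Qed.

Section measure_union_bound.
Context d (T : measurableType d) (R : realType) (mu : {measure set T -> \bar R}).

Lemma measure_bigsetU_le n (F : 'I_n -> set T) : (forall j, measurable (F j)) ->
  (mu (\big[setU/set0]_(j < n) F j) <= \sum_(j < n) mu (F j))%E.
Proof.
move=> mF.
pose Q U e := measurable U /\ (mu U <= e)%E.
suff [] : Q (\big[setU/set0]_(j < n) F j) (\sum_(j < n) mu (F j)) by [].
apply: (big_ind2 Q); first by split; rewrite ?measure0.
- move=> U1 e1 U2 e2 [mU1 le1] [mU2 le2]; split; first exact: measurableU.
  exact: le_trans (measureU2 _ mU1 mU2) (leeD le1 le2).
- by move=> j _; split.
Qed.

Lemma measurable_supnorm p (f : T -> 'rV[R]_p) :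
  (forall j, measurable_fun setT (fun w => f w 0 j)) ->
  measurable_fun setT (fun w => supnorm (f w)).
Proof.
move=> mf; rewrite /supnorm; elim: (index_enum _) => [|j s ih].
  by under eq_fun do rewrite big_nil; exact: measurable_cst.
under eq_fun do rewrite big_cons.
by apply: measurable_maxr => //; exact: measurableT_comp.
Qed.

Lemma measurable_fun_subr_coord p (f : T -> 'rV[R]_p) (v : 'rV[R]_p) :
  (forall j, measurable_fun setT (fun w => f w 0 j)) ->
  forall j, measurable_fun setT (fun w => (f w - v) 0 j).
Proof. by move=> mf j; under eq_fun do rewrite !mxE; exact: measurable_funB. Qed.

Lemma measurable_lt_fun (f : T -> R) (c : R) : measurable_fun setT f ->
  measurable [set w | c < f w].
Proof.
by move=> mf; rewrite -preimage_itvoy -[X in measurable X]setTI; exact: mf.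
Qed.

Lemma measure_supnorm_gt_le p (f : T -> 'rV[R]_p) (eps : R) : 0 <= eps ->
  (forall j, measurable_fun setT (fun w => f w 0 j)) ->
  (mu [set w | eps < supnorm (f w)]%R <=
   \sum_(j < p) mu [set w | eps < `|f w 0 j|]%R)%E.
Proof.
move=> e0 mf.
have mFj j : measurable [set w | eps < `|f w 0 j|].
  by apply: measurable_lt_fun; exact: measurableT_comp.
have := measure_bigsetU_le mFj; apply: le_trans.
apply: le_measure; rewrite ?inE /=.
- by apply: measurable_lt_fun; exact: measurable_supnorm.
- exact: bigsetU_measurable.
- move=> w /(supnorm_gt_exists e0)[j hj].
  by rewrite (bigD1 j) //=; left.
Qed.

End measure_union_bound.

Section subgaussian_tail.
Context d (Omega : measurableType d) (R : realType) (P : probability Omega R).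

Lemma subgaussian_tail (X : Omega -> R) (C t : R) :
  measurable_fun setT X -> subgaussian P X C -> C != 0 -> 0 <= t ->
  (P [set w | t < `|X w - fine (\int[P]_v (X v)%:E)|]%R <=
   (2 * expR (- (t ^+ 2 / (2 * C ^+ 2))))%:E)%E.
Proof.
move=> mX [_ mgf] C0 t0.
set m := fine _; set lam := t / C ^+ 2; set b := expR (C ^+ 2 * lam ^+ 2 / 2).
have lam0 : 0 <= lam by rewrite divr_ge0 ?sqr_ge0.
have mY : measurable_fun setT (fun w => X w - m) by exact: measurable_funB.
have mexp s : measurable_fun setT (fun w => expR (s * (X w - m))).
  by apply: measurableT_comp => //; exact: measurable_funM.
have mgfN : (\int[P]_w (expR (- lam * (X w - m)))%:E <= b%:E)%E.
  by have := mgf (- lam); rewrite sqrrN.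
set A := [set w | _].
have mA : measurable A by apply: measurable_lt_fun; exact: measurableT_comp.
rewrite -(setIT A) -integral_indic //.
apply: (@le_trans _ _ (\int[P]_w
   (expR (- (lam * t)) * (expR (lam * (X w - m)) + expR (- lam * (X w - m))))%:E)%E).
  apply: ge0_le_integral => //.
  - by apply/measurable_EFinP; exact: measurable_indic.
  - by apply/measurable_EFinP; apply: measurable_funM => //; exact: measurable_funD.
  move=> w _; rewrite lee_fin indicE; case: (boolP (w \in A)) => [|_]; last first.
    by rewrite mulr_ge0 ?addr_ge0 ?expR_ge0.
  by rewrite inE => /(expR_two_sided_ge1 lam0).
under eq_integral do rewrite EFinM EFinD.
rewrite ge0_integralZl_EFin //; last 2 first.
- by move=> w _; rewrite adde_ge0 // lee_fin expR_ge0.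
- by apply: emeasurable_funD; apply/measurable_EFinP.
rewrite ge0_integralD //;
  try by [move=> w _; rewrite lee_fin expR_ge0 | apply/measurable_EFinP].
rewrite -(chernoff_exponent t C0) -/lam -/b expRD mulrCA EFinM.
apply: lee_wpmul2l; first by rewrite lee_fin expR_ge0.
by rewrite mulr_natl mulr2n EFinD; exact: leeD (mgf lam) mgfN.
Qed.

Lemma fine_measureI_le (A B : set Omega) : measurable A -> measurable B ->
  fine (P (A `&` B)) <= fine (P A).
Proof.
move=> mA mB; have mAB := measurableI _ _ mA mB.
by apply: fine_le; rewrite ?fin_num_measure //; apply: le_measure; rewrite ?inE.
Qed.

Lemma integral_scaled_centered (f : Omega -> R) (c s : R) :
  P.-integrable setT (fun w => (f w)%:E) -> (\int[P]_w (f w)%:E = c%:E)%E ->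
  (\int[P]_w (s * (f w - c))%:E = 0)%E.
Proof.
move=> intf Ef.
have intc : P.-integrable setT (EFin \o cst c) by exact: finite_measure_integrable_cst.
under eq_integral do rewrite EFinM EFinB.
rewrite integralZl //; last exact: integrableB.
rewrite integralB_EFin // Ef.
have -> : (\int[P]_w (EFin \o cst c) w = c%:E)%E.
  by rewrite (integral_cst P measurableT c%:E) /= probability_setT mule1.
by rewrite subee // mule0.
Qed.

Lemma unbiased_subgaussian_supnorm_tail p (f : Omega -> 'rV[R]_p) (th0 : 'rV[R]_p)
    (s C eps : R) :
  (forall j, measurable_fun setT (fun w => f w 0 j)) ->
  (forall j, P.-integrable setT (fun w => (f w 0 j)%:E) /\
             (\int[P]_w (f w 0 j)%:E = (th0 0 j)%:E)%E) ->
  (forall j, subgaussian P (fun w => s * (f w 0 j - th0 0 j)) C) ->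
  0 < s -> C != 0 -> 0 <= eps ->
  fine (P [set w | eps < supnorm (f w - th0)]) <=
    p%:R * (2 * expR (- ((s * eps) ^+ 2 / (2 * C ^+ 2)))).
Proof.
move=> mf unb sg s0 C0 e0.
set e := 2 * expR _.
have mdev := measurable_fun_subr_coord th0 mf.
rewrite -lee_fin fineK ?fin_num_measure //; last first.
  by apply: measurable_lt_fun; exact: measurable_supnorm.
apply: (le_trans (measure_supnorm_gt_le _ e0 mdev)).
apply: (@le_trans _ _ (\sum_(j < p) e%:E)%E); last first.
  by rewrite sumEFin sumr_const card_ord mulr_natl.
apply: lee_sum => j _.
have mX : measurable_fun setT (fun w => s * (f w 0 j - th0 0 j)).
  by apply: measurable_funM => //; exact: measurable_funB.
have := subgaussian_tail mX (sg j) C0 (mulr_ge0 (ltW s0) e0).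
rewrite integral_scaled_centered; [|exact: (unb j).1|exact: (unb j).2].
congr (P _ <= _)%E; apply/seteqP; split=> w /=.
all: by rewrite !mxE subr0 normrM gtr0_norm // ltr_pM2l.
Qed.

End subgaussian_tail.

Theorem theorem3
  (R : realType) (d : measure_display) (Omega : measurableType d)
  (P : probability Omega R)
  (dY : measure_display) (Y : measurableType dY)
  (fstar : probability Y R)
  (y : nat -> Omega -> Y)
  (p : nat) (T : Y -> 'rV[R]_p) (nu : {measure set Y -> \bar R})
  (Theta : set 'rV[R]_p)
  (Mods : countType) (ThetaM : Mods -> set 'rV[R]_p)
  (S : nat -> 'rV[R]_p -> Mods)
  (M : Mods) (theta0 : 'rV[R]_p)
  (thetat : nat -> Omega -> 'rV[R]_p) (C : R) :
  (* i.i.d. sample from f^* *)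
  (forall i, measurable_fun setT (y i)) ->
  mutually_independent P y ->
  (forall i (B : set Y), measurable B -> P (y i @^-1` B) = fstar B) ->
  (* regular exponential family and the countable collection of submodels *)
  regular_expfam nu T Theta ->
  (forall m, ThetaM m `<=` Theta) ->
  (* model selection events are events *)
  (forall n m, measurable [set w | S n (Tbar T y n w) = m]) ->
  (* theta0 = theta^M_0 = argsup_{theta in Theta^M} E_{f^*}[l_theta(y)] *)
  theta0 \in ThetaM M ->
  (forall th, th \in ThetaM M ->
     (\int[fstar]_u (loglik nu T th u)%:E <= \int[fstar]_u (loglik nu T theta0 u)%:E)%E) ->
  (* P_n(M)^{-1} e^{-delta n} -> 0 for every delta > 0 *)
  (\forall n \near \oo, 0 < fine (P [set w | S n (Tbar T y n w) = M])) ->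
  (forall delta : R, 0 < delta ->
     (fun n : nat => (fine (P [set w | S n (Tbar T y n w) = M]))^-1
                      * expR (- (delta * n%:R))) @ \oo --> 0) ->
  (* the estimator is a measurable function of y_1, ..., y_n *)
  (forall n j, measurable_fun setT (fun w => thetat n w 0 j)) ->
  (forall n, exists g : ('I_n -> Y) -> 'rV[R]_p,
     forall w, thetat n w = g (fun i => y i w)) ->
  (* unconditionally unbiased for theta0 *)
  (forall n j, (0 < n)%N ->
     P.-integrable setT (fun w => (thetat n w 0 j)%:E) /\
     (\int[P]_w (thetat n w 0 j)%:E = (theta0 0 j)%:E)%E) ->
  (* uniform sub-Gaussianity of sqrt n (thetat_{n,j} - theta0_j) *)
  0 < C ->
  (forall n j, (0 < n)%N ->
     subgaussian P (fun w => Num.sqrt n%:R * (thetat n w 0 j - theta0 0 j)) C) ->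
  forall eps : R, 0 < eps ->
    (fun n : nat =>
       fine (P ([set w | supnorm (thetat n w - theta0) > eps]
                `&` [set w | S n (Tbar T y n w) = M]))
       / fine (P [set w | S n (Tbar T y n w) = M])) @ \oo --> 0.
Proof.
move=> _ _ _ _ _ mS _ _ _ PMexp mth _ unb C0 sg eps e0.
have C0' : C != 0 by rewrite gt_eqF.
set delta := eps ^+ 2 / (2 * C ^+ 2).
have delta0 : 0 < delta by rewrite divr_gt0 ?exprn_gt0 ?mulr_gt0.
set PM := fun n => fine (P [set w | S n (Tbar T y n w) = M]).
apply: (@squeeze_cvgr _ _ _ _ (fun=> 0)
  (fun n => 2 * p%:R * ((PM n)^-1 * expR (- (delta * n%:R))))); last 2 first.
- exact: cvg_cst.
- by rewrite -(mulr0 (2 * p%:R)); exact: cvgM (cvg_cst _) (PMexp _ delta0).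
near=> n.
have n0 : (0 < n)%N by near: n; exists 1%N.
have mB := mS n M.
set A := [set w | eps < supnorm (thetat n w - theta0)].
have mA : measurable A.
  by apply: measurable_lt_fun; exact/measurable_supnorm/measurable_fun_subr_coord.
have PMinv0 : 0 <= (PM n)^-1 by rewrite invr_ge0 fine_ge0.
rewrite divr_ge0 ?fine_ge0 //=.
have sn0 : 0 < Num.sqrt n%:R :> R by rewrite sqrtr_gt0 ltr0n.
have tail := unbiased_subgaussian_supnorm_tail (mth n) (fun j => unb n j n0)
  (fun j => sg n j n0) sn0 C0' (ltW e0).
apply: (le_trans (ler_wpM2r PMinv0 (fine_measureI_le P mA mB))).
apply: (le_trans (ler_wpM2r PMinv0 tail)).
have -> : (Num.sqrt n%:R * eps) ^+ 2 / (2 * C ^+ 2) = delta * n%:R.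
  by rewrite exprMn sqr_sqrtr ?ler0n // /delta; ring.
by rewrite le_eqVlt; apply/orP; left; apply/eqP; ring.
Unshelve. all: by end_near.
Qed.
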